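(* Let $G$ be a graph (simple, connected, locally finite, with edges of arbitrary positive lengths) and let $\mathcal{L}(G)$ be its line graph. Let $h:\mathcal{L}(G)\to G$ be the map defined below. Then $h$ is $1$-Lipschitz, i.e. $$d_G(h(x),h(y))\le d_{\mathcal{L}(G)}(x,y)\quad\text{for all } x,y\in\mathcal{L}(G).$$
   Context: Graphs are regarded as geodesic metric spaces: each edge $e$ of length $L(e)$ is identified with the real interval $[0,L(e)]$, so interior points of edges are points of the graph, and $d_G$ is the induced shortest-path distance. The line graph $\mathcal{L}(G)$ has a vertex $V_e$ for each edge $e$ of $G$, and an edge $[V_{e_i},V_{e_j}]$ whenever $e_i\neq e_j$ and $e_i\cap e_j\neq\varnothing$; the length of $[V_{e_i},V_{e_j}]$ is $(L(e_i)+L(e_j))/2$. For $e\in E(G)$, $Pm(e)$ denotes the midpoint of $e$. For an edge $[V_{e_i},V_{e_j}]$ of $\mathcal{L}(G)$, $Pm_{\mathcal{L}}([V_{e_i},V_{e_j}])$ denotes the point of that edge at distance $L(e_i)/2$ from $V_{e_i}$ (hence at distance $L(e_j)/2$ from $V_{e_j}$). The map $h$ is defined by $h(V_e)=Pm(e)$ and $h(Pm_{\mathcal{L}}([V_{e_i},V_{e_j}]))=$ the common vertex $e_i\cap e_j$ of $G$; and for a point $x_0$ in the interior of the segment from $V_e$ to $Pm_{\mathcal{L}}([V_e,V_{e_0}])$ (a segment of length $L(e)/2$), $h(x_0)$ is the point of the half-edge of $e$ from $Pm(e)$ to the vertex $e\cap e_0$ at distance $d(x_0,V_e)$ from $Pm(e)$.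 *)

From HB Require Import structures.
From mathcomp Require Import all_boot all_order all_algebra.
From mathcomp Require Import boolp classical_sets reals.
From Stdlib Require List.
Set Implicit Arguments. Unset Strict Implicit. Unset Printing Implicit Defensive.
Import Order.TTheory GRing.Theory Num.Theory.
Local Open Scope ring_scope.
Local Open Scope classical_set_scope.

(* A weighted graph: vertex type, adjacency relation, edge-length function
   (len u v is the length of the edge {u,v}, meaningful when adj u v). *)
Record mgraph (R : realType) := MGraph {
  gV : Type;
  gadj : gV -> gV -> Prop;
  glen : gV -> gV -> R }.

Section Graphs.
Variable R : realType.
Implicit Types G : mgraph R.

(* A finite walk a = v0, v1, ..., vk (the list vs = [v1;...;vk]). *)
Fixpoint walk_ok G (a : gV G) (vs : seq (gV G)) : Prop :=
  match vs with
  | [::] => True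
  | v :: vs' => gadj a v /\ walk_ok v vs'
  end.

Fixpoint walk_len G (a : gV G) (vs : seq (gV G)) : R :=
  match vs with
  | [::] => 0
  | v :: vs' => glen a v + walk_len v vs'
  end.

Definition wf_graph G : Prop :=
  [/\ (forall u v : gV G, gadj u v -> gadj v u),
      (forall u : gV G, ~ gadj u u),
      (forall u v : gV G, gadj u v -> glen u v = glen v u /\ 0 < glen u v),
      (forall u : gV G, exists s : seq (gV G), forall v, gadj u v -> List.In v s)
    & (forall a b : gV G, exists vs, walk_ok a vs /\ last a vs = b)].

(* A point of the metric graph G: a triple (u, v, t) with adj u v and
   0 <= t <= len u v, denoting the point of the edge {u,v} at distance t from u.
   (Vertex w is represented by (w, v, 0) for any neighbour v.)  Several triples
   represent the same point; the distance below does not depend on the choice. *)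
Definition mpoint G := (gV G * gV G * R)%type.

Definition is_point G (x : mpoint G) : Prop :=
  gadj x.1.1 x.1.2 /\ 0 <= x.2 <= glen x.1.1 x.1.2.

(* Lengths of the paths from x to y in the metric graph: either a path inside
   the common edge, or: from x to an endpoint a of its edge, then a walk from
   a to an endpoint b of y's edge, then from b to y. *)
Definition path_lengths G (x y : mpoint G) : set R :=
  [set d | ((x.1.1 = y.1.1 /\ x.1.2 = y.1.2 /\ d = `|x.2 - y.2|)
          \/ (x.1.1 = y.1.2 /\ x.1.2 = y.1.1
              /\ d = `|x.2 - (glen y.1.1 y.1.2 - y.2)|))
       \/ (exists (a b : gV G) (ca cb : R) (vs : seq (gV G)),
             ((a = x.1.1 /\ ca = x.2) \/ (a = x.1.2 /\ ca = glen x.1.1 x.1.2 - x.2))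
          /\ ((b = y.1.1 /\ cb = y.2) \/ (b = y.1.2 /\ cb = glen y.1.1 y.1.2 - y.2))
          /\ walk_ok a vs /\ last a vs = b
          /\ d = ca + walk_len a vs + cb)].

Definition gdist G (x y : mpoint G) : R := inf (path_lengths x y).

Definition edge_set G (u v : gV G) : gV G -> Prop := fun w => w = u \/ w = v.

Definition gedge G := {e : gV G -> Prop | exists u v, gadj u v /\ e = edge_set u v}.

Definition eend1 G (e : gedge G) : gV G := projT1 (cid (proj2_sig e)).
Definition eend2 G (e : gedge G) : gV G :=
  projT1 (cid (projT2 (cid (proj2_sig e)))).

Definition elen G (e : gedge G) : R := glen (eend1 e) (eend2 e).

Definition line_adj G (e f : gedge G) : Prop :=
  e <> f /\ exists w, proj1_sig e w /\ proj1_sig f w.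

Definition line_graph G : mgraph R :=
  @MGraph R (gedge G) (@line_adj G) (fun e f => (elen e + elen f) / 2).

(* the common vertex e ∩ f (meaningful when e, f are adjacent in L(G)) *)
Definition common_vertex G (e f : gedge G) : gV G :=
  match pselect (exists w, proj1_sig e w /\ proj1_sig f w) with
  | left H => projT1 (cid H)
  | right _ => eend1 e
  end.

Definition other_end G (e : gedge G) (w : gV G) : gV G :=
  if pselect (w = eend1 e) then eend2 e else eend1 e.

(* A point x = (V_e, V_f, t) of L(G) lies on the edge
   [V_e, V_f] at distance t from V_e; Pm_L([V_e,V_f]) is at t = L(e)/2.
   - for t <= L(e)/2, h(x) is the point of the half-edge of e from Pm(e) to
     w = e ∩ f at distance t from Pm(e), i.e. at distance L(e)/2 - t from w;
   - for t >= L(e)/2 (distance L(f)/2 - (t - L(e)/2)... from V_f), h(x) is the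
     point of the half-edge of f from Pm(f) to w at distance
     (L(e)+L(f))/2 - t from Pm(f), i.e. at distance t - L(e)/2 from w.
   In particular h(V_e) = Pm(e), h(V_f) = Pm(f), h(Pm_L) = w. *)
Definition hmap G (x : mpoint (line_graph G)) : mpoint G :=
  let: (e, f, t) := x in
  let w := common_vertex e f in
  if t <= elen e / 2 then (w, other_end e w, elen e / 2 - t)
  else (w, other_end f w, t - elen e / 2).

End Graphs.

From HB Require Import structures.
From mathcomp Require Import all_boot all_order all_algebra.
From mathcomp Require Import boolp classical_sets reals.
From mathcomp Require Import lra.
Import Order.TTheory GRing.Theory Num.Theory.
Set Implicit Arguments. Unset Strict Implicit. Unset Printing Implicit Defensive.
Local Open Scope ring_scope.

(* The segment of L(G) between V_e and V_f, of length (L(e) + L(f))/2, is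
   mapped by h isometrically onto the two half-edges Pm(e) -- w -- Pm(f)
   through the common vertex w of e and f.  So a path of L(G) from x to y,
   i.e. a walk e_0, ..., e_k of edges of G plus the two end pieces, is mapped
   onto a path of G from h(x) to h(y) through the vertices e_i ∩ e_(i+1), of
   no greater length: when two consecutive common vertices coincide the path
   of G simply skips the edge in between.  Hence every path length from x to
   y dominates one from h(x) to h(y), and the inequality follows on taking
   infima. *)

Ltac norm_lra :=
  first [rewrite ler_norml; apply/andP; split | idtac];
  match goal with
  | |- context [`|?X|] =>
      have := ler_norm X; have := ler_norm (- X); rewrite normrN => ? ?; lra
  | _ => lra
  end.

(* [a] is an endpoint of the edge carrying [p], at distance [c] from [p]
   along that edge: the shape of the end pieces in [path_lengths]. *)
Definition edge_end (R : realType) (G : mgraph R) (p : mpoint G) (a : gV G)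
    (c : R) :=
  (a = p.1.1 /\ c = p.2) \/ (a = p.1.2 /\ c = glen p.1.1 p.1.2 - p.2).

Section LineGraphContraction.
Variables (R : realType) (G : mgraph R).
Hypothesis wfG : wf_graph G.
Implicit Types (a b u v w z : gV G) (vs ws : seq (gV G)) (p q : mpoint G).
Implicit Types (e f : gedge G).

Local Notation LG := (line_graph G).

Lemma walk_ok_cat a vs ws :
  walk_ok a (vs ++ ws) = (walk_ok a vs /\ walk_ok (last a vs) ws).
Proof.
by apply/propext; elim: vs a => [|v vs IH] a /=; [tauto | rewrite IH; tauto].
Qed.

Lemma walk_len_cat a vs ws :
  walk_len a (vs ++ ws) = walk_len a vs + walk_len (last a vs) ws.
Proof. by elim: vs a => [|v vs IH] a /=; rewrite ?add0r ?IH ?addrA. Qed.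

Lemma walk_len_ge0 a vs : walk_ok a vs -> 0 <= walk_len a vs.
Proof.
have [_ _ adj_len _ _] := wfG; elim: vs a => [|v vs IH] a //= [av vsP].
by have [_ ?] := adj_len _ _ av; have := IH _ vsP; lra.
Qed.

Lemma walk_rev a vs : walk_ok a vs ->
  exists ws, [/\ walk_ok (last a vs) ws, last (last a vs) ws = a
               & walk_len (last a vs) ws = walk_len a vs].
Proof.
have [adj_sym _ adj_len _ _] := wfG.
elim: vs a => [|v vs IH] a /=; first by exists [::].
case=> av /IH [ws [wsP ws_last ws_len]].
exists (rcons ws a); rewrite -cats1 walk_ok_cat walk_len_cat last_cat ws_last.
split=> //=; first by split=> //; split=> //; apply: adj_sym.
by rewrite ws_len addr0 addrC (adj_len _ _ av).1.
Qed.

Definition reach_within p v (c : R) :=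
  exists a ca vs,
    [/\ edge_end p a ca, walk_ok a vs, last a vs = v & ca + walk_len a vs <= c].

Lemma reach_within_le p v c c' :
  reach_within p v c -> c <= c' -> reach_within p v c'.
Proof.
move=> [a [ca [vs [? ? ? le_c]]]] cc'; exists a, ca, vs; split=> //.
exact: le_trans cc'.
Qed.

Lemma reach_within_walk p u c ws : reach_within p u c -> walk_ok u ws ->
  reach_within p (last u ws) (c + walk_len u ws).
Proof.
move=> [a [ca [vs [? ? vs_last le_c]]]] wsP; exists a, ca, (vs ++ ws).
by rewrite walk_ok_cat last_cat walk_len_cat vs_last; split=> //; lra.
Qed.

Lemma path_lengths_reach p q v c1 c2 :
  reach_within p v c1 -> reach_within q v c2 ->
  exists2 d, path_lengths p q d & d <= c1 + c2.
Proof.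
move=> [a [ca [vs [pa vsP vs_last le1]]]] [b [cb [ws [qb wsP ws_last le2]]]].
have [ws' [] ] := walk_rev wsP; rewrite ws_last => ws'P ws'_last ws'_len.
exists (ca + walk_len a (vs ++ ws') + cb).
  right; exists a, b, ca, cb, (vs ++ ws').
  by rewrite walk_ok_cat last_cat vs_last.
by rewrite walk_len_cat vs_last ws'_len; lra.
Qed.

Lemma path_lengths_ge0 p q : 0 <= p.2 <= glen p.1.1 p.1.2 ->
  0 <= q.2 <= glen q.1.1 q.1.2 -> forall d, path_lengths p q d -> 0 <= d.
Proof.
move=> /andP[? ?] /andP[? ?] d.
case=> [[[_ [_ ->]] | [_ [_ ->]]]
        | [a [b [ca [cb [vs [pa [qb [vsP [_ ->]]]]]]]]]];
  rewrite ?normr_ge0 //.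
have := walk_len_ge0 vsP.
by case: pa => -[_ ->]; case: qb => -[_ ->]; lra.
Qed.

Lemma path_lengths_same_edge w o (s1 s2 : R) :
  path_lengths (w, o, s1) (w, o, s2) `|s1 - s2|.
Proof. by left; left. Qed.

Lemma path_lengths_via_vertex w o1 o2 (s1 s2 : R) :
  path_lengths (w, o1, s1) (w, o2, s2) (s1 + s2).
Proof.
right; exists w, w, s1, s2, [::].
by do 2 (split; first by left); rewrite /= addr0.
Qed.

Lemma eendP e :
  gadj (eend1 e) (eend2 e) /\ sval e = edge_set (eend1 e) (eend2 e).
Proof.
rewrite /eend1 /eend2; case: (cid (proj2_sig e)) => u H /=.
by move: (svalP _) => /= H'; case: (cid H') => v /= [].
Qed.

Lemma on_edgeE e w : sval e w <-> w = eend1 e \/ w = eend2 e.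
Proof. by have [_ ->] := eendP e. Qed.

Lemma elen_gt0 e : 0 < elen e.
Proof. have [_ _ adj_len _ _] := wfG; exact: (adj_len _ _ (eendP e).1).2. Qed.

Lemma other_endP e w : sval e w ->
  [/\ sval e (other_end e w), other_end e w <> w,
      gadj w (other_end e w) & glen w (other_end e w) = elen e].
Proof.
have [adj_sym adj_irr adj_len _ _] := wfG => ew.
have [e12 _] := eendP e.
have e1 : sval e (eend1 e) by apply/on_edgeE; left.
have e2 : sval e (eend2 e) by apply/on_edgeE; right.
have n12 : eend1 e <> eend2 e.
  by move=> eq12; apply: (adj_irr (eend1 e)); rewrite {2}eq12.
rewrite /other_end /elen; case: pselect => [w1|ne1] /=.
  by rewrite w1; split=> // /esym.
have -> : w = eend2 e by case/on_edgeE: ew.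
by split=> //; [apply: adj_sym | have [] := adj_len _ _ e12].
Qed.

Lemma on_edge_other e w u : sval e w -> sval e u -> u = w \/ u = other_end e w.
Proof.
rewrite !on_edgeE /other_end.
case: pselect => [w1|nw1] /= ew eu; first by rewrite w1; tauto.
by case: ew => // ->; tauto.
Qed.

Lemma other_endK e w : sval e w -> other_end e (other_end e w) = w.
Proof.
move=> ew; have [eo ow _ _] := other_endP ew.
by case: (on_edge_other eo ew) => // /esym.
Qed.

Lemma on_edge_adj e w u : sval e w -> sval e u ->
  u = w \/ (gadj w u /\ glen w u = elen e).
Proof.
move=> ew eu; case: (on_edge_other ew eu) => [|->]; first by left.
by have [_ _ ? ?] := other_endP ew; right.
Qed.

Lemma common_vertexP e f : line_adj e f ->
  sval e (common_vertex e f) /\ sval f (common_vertex e f).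
Proof.
move=> [_ H]; rewrite /common_vertex; case: pselect => // H'.
by case: (cid H').
Qed.

Lemma common_vertex_uniq e f w1 w2 : line_adj e f ->
  sval e w1 -> sval f w1 -> sval e w2 -> sval f w2 -> w1 = w2.
Proof.
move=> [nef _] e1 f1 e2 f2; apply: contrapT => n12; apply: nef.
have edgeE (g : gedge G) :
    sval g w1 -> sval g w2 -> sval g = (fun z => z = w1 \/ z = w2).
  move=> g1 g2; apply: funext => z; apply: propext; split; last by case=> ->.
  case/(on_edge_other g1) => [->|->]; first by left.
  by case: (on_edge_other g1 g2) => [/esym/n12 [] | ->]; right.
move: (edgeE e e1 e2) (edgeE f f1 f2).
case: e {e1 e2} => pe he; case: f {f1 f2} => pf hf /= Epe Epf; subst pe pf.
by congr exist; apply: Prop_irrelevance.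
Qed.

Lemma common_vertexC e f :
  line_adj e f -> common_vertex f e = common_vertex e f.
Proof.
move=> ef; have fe : line_adj f e.
  by case: ef => [nef [w [? ?]]]; split; [move=> /esym | exists w].
have [? ?] := common_vertexP ef; have [? ?] := common_vertexP fe.
exact: (common_vertex_uniq ef).
Qed.

Lemma line_walk_lift a vs : walk_ok a vs -> forall e f,
  sval e a -> sval f (last a vs) ->
  exists ls, @walk_ok R LG e ls /\ last e ls = f.
Proof.
elim: vs a => [|v vs IH] a /= => [_|[av vsP]] e f ea.
  move=> fa; case: (pselect (e = f)) => [->|nef]; first by exists [::].
  by exists [:: f]; split=> //; split=> //; split=> //; exists a.
move=> f_last.
have gP : exists u w, gadj u w /\ edge_set a v = edge_set u w by exists a, v.
pose g : gedge G := exist _ (edge_set a v) gP.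
have [ls [lsP ls_last]] := IH v vsP g f (or_intror erefl) f_last.
case: (pselect (e = g)) => [->|neg]; first by exists ls.
exists (g :: ls); split=> //; split=> //; split=> //.
by exists a; split=> //; left.
Qed.

(* The common vertices of consecutive edges of the walk form a walk of G; each
   of its steps is an edge of the walk, of length at most its L(G)-length. *)
Lemma line_walk_proj (ls : seq (gedge G)) (a : gedge G) :
  @walk_ok R LG a ls -> (0 < size ls)%N ->
  exists u z ws, [/\ sval a u, sval (last a ls) z, walk_ok u ws, last u ws = z
    & walk_len u ws <= @walk_len R LG a ls - (elen a + elen (last a ls)) / 2].
Proof.
elim: ls a => [//|c ls IH] a /= [[_ [w [aw cw]]] lsP] _.
case: ls IH lsP => [|c' ls] IH lsP.
  by exists w, w, [::]; split=> //=; lra.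
have [u' [z [ws [cu' lz wsP ws_last ws_len]]]] := IH c lsP isT.
have c_gt0 := elen_gt0 c; case: (on_edge_adj cw cu') => [u'w|[wu' len_wu']].
  by subst u'; exists w, z, ws; split=> //; move: ws_len => /=; lra.
by exists w, z, (u' :: ws); split=> //=; move: ws_len => /=; lra.
Qed.

Lemma path_lengths_line_neq0 (x y : mpoint LG) : is_point x -> is_point y ->
  (path_lengths x y !=set0)%classic.
Proof.
case: x y => [[e f] t] [[e' f'] t'] _ _ /=.
have [_ _ _ _ conn] := wfG.
have [vs [vsP vs_last]] := conn (eend1 e) (eend1 e').
have e1 : sval e (eend1 e) by apply/on_edgeE; left.
have e'1 : sval e' (last (eend1 e) vs) by rewrite vs_last; apply/on_edgeE; left.
have [ls [lsP ls_last]] := line_walk_lift vsP e1 e'1.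
exists (t + @walk_len R LG e ls + t'); right; exists e, e', t, t', ls.
by do 2 (split; first by left).
Qed.

(* [p] is within distance [c] of the midpoint Pm(a): either on a half-edge of
   [a] at distance [d <= c] from Pm(a), or reachable from an endpoint of [a]
   within the remaining budget [c - L(a)/2]. *)
Definition near_mid p (a : gedge G) (c : R) :=
  (exists u d, [/\ sval a u, p = (u, other_end a u, elen a / 2 - d),
                   0 <= d, d <= c & d <= elen a / 2])
  \/ (exists2 u, sval a u & reach_within p u (c - elen a / 2)).

Lemma near_mid_reach p (a : gedge G) c v : near_mid p a c -> sval a v ->
  reach_within p v (c + elen a / 2).
Proof.
case=> [[u [d [au -> d_ge0 d_le d_half]]] | [u au pu]] av.
  case: (on_edge_other au av) => ->.
    by exists u, (elen a / 2 - d), [::]; split=> //=; [left | lra].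
  have [_ _ _ len_uo] := other_endP au.
  exists (other_end a u), (glen u (other_end a u) - (elen a / 2 - d)), [::].
  by split=> //=; [right | lra].
case: (on_edge_other au av) => ->.
  by apply: reach_within_le pu _; have := elen_gt0 a; lra.
have [_ _ adj_uo len_uo] := other_endP au.
have := reach_within_walk pu (ws := [:: other_end a u]) (conj adj_uo I).
by move=> /reach_within_le; apply; rewrite /= len_uo; lra.
Qed.

Lemma path_lengths_near_mid p q (a : gedge G) c1 c2 :
  near_mid p a c1 -> near_mid q a c2 ->
  exists2 d, path_lengths p q d & d <= c1 + c2.
Proof.
move=> Hp Hq; case: Hp => [Hp | [u au pu]]; last first.
  have [d ? ?] := path_lengths_reach pu (near_mid_reach Hq au).
  by exists d => //; lra.
case: Hq => [Hq | [u au qu]]; last first.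
  have [d ? ?] := path_lengths_reach (near_mid_reach (or_introl Hp) au) qu.
  by exists d => //; lra.
move: Hp Hq => [u [d1 [au -> ? ? ?]]] [u' [d2 [au' -> ? ? ?]]].
case: (on_edge_other au au') => ->.
  by eexists; [exact: path_lengths_same_edge | norm_lra].
have [ao _ _ _] := other_endP au; have [_ _ _] := other_endP ao.
rewrite (other_endK au) => len_ou.
eexists; first by left; right.
by rewrite /= len_ou; norm_lra.
Qed.

Lemma hmap_near_mid (x : mpoint LG) (a : gedge G) c :
  is_point x -> edge_end x a c ->
  near_mid (hmap x) a c.
Proof.
case: x => [[e f] t] [/= ef /andP[? ?]].
have [ew fw] := common_vertexP ef.
have := elen_gt0 e; have := elen_gt0 f.
rewrite /hmap /= => ? ?; case=> -[-> ->]; case: (leP t (elen e / 2)) => ?.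
- by left; exists (common_vertex e f), t; split=> //; lra.
- right; exists (common_vertex e f) => //.
  exists (common_vertex e f), (t - elen e / 2), [::].
  by split=> //=; [left | lra].
- right; exists (common_vertex e f) => //.
  exists (common_vertex e f), (elen e / 2 - t), [::].
  by split=> //=; [left | lra].
- left; exists (common_vertex e f), ((elen e + elen f) / 2 - t).
  by split=> //; [congr (_, _); lra | lra | lra].
Qed.

Lemma hmap_on_edge (x : mpoint LG) : is_point x ->
  0 <= (hmap x).2 <= glen (hmap x).1.1 (hmap x).1.2.
Proof.
case: x => [[e f] t] [/= ef /andP[? ?]].
have [ew fw] := common_vertexP ef.
have [_ _ _ len_e] := other_endP ew; have [_ _ _ len_f] := other_endP fw.
rewrite /hmap /=; case: (leP t (elen e / 2)) => ? /=; rewrite ?len_e ?len_f.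
all: by apply/andP; split; lra.
Qed.

Lemma hmap_path_lengths (x y : mpoint LG) : is_point x -> is_point y ->
  forall d, path_lengths x y d ->
  exists2 d', path_lengths (hmap x) (hmap y) d' & d' <= d.
Proof.
move=> px py d.
case=> [[[xy1 [xy2 ->]] | [xy1 [xy2 ->]]]
        | [a [b [ca [cb [ls [xa [yb [lsP [ls_last ->]]]]]]]]]].
- move: x y px py xy1 xy2 => [[e f] t] [[? ?] t'] _ _ /= <- <-.
  rewrite /hmap /=.
  case: (leP t (elen e / 2)) => ?; case: (leP t' (elen e / 2)) => ?; eexists;
    by [exact: path_lengths_same_edge | exact: path_lengths_via_vertex
       | norm_lra].
- move: x y px py xy1 xy2 => [[e f] t] [[? ?] t'] [/= ef _] _ /= <- <-.
  rewrite /hmap /= (common_vertexC ef).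
  case: (leP t (elen e / 2)) => ?; case: (leP t' (elen f / 2)) => ?; eexists;
    by [exact: path_lengths_same_edge | exact: path_lengths_via_vertex
       | norm_lra].
- have hx := hmap_near_mid px xa; have hy := hmap_near_mid py yb.
  case: ls lsP ls_last => [|c ls] lsP ls_last.
    move: ls_last hy => /= <- hy; have [d' ? ?] := path_lengths_near_mid hx hy.
    by exists d' => //=; lra.
  have [u [z [ws [au bz wsP ws_last ws_len]]]] := line_walk_proj lsP isT.
  rewrite ls_last in bz ws_len.
  have := reach_within_walk (near_mid_reach hx au) wsP; rewrite ws_last => hxz.
  have [d' ? ?] := path_lengths_reach hxz (near_mid_reach hy bz).
  by exists d' => //; lra.
Qed.

End LineGraphContraction.

Theorem mainTheorem1 (R : realType) (G : mgraph R) :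
  wf_graph G ->
  forall x y : mpoint (line_graph G),
    is_point x -> is_point y ->
    gdist (hmap x) (hmap y) <= gdist x y.
Proof.
move=> wfG x y px py; apply: lb_le_inf; first exact: path_lengths_line_neq0.
move=> d /(hmap_path_lengths wfG px py) [d' hd' le_d'd].
apply: le_trans le_d'd; apply: ge_inf hd'; exists 0.
exact: path_lengths_ge0 (hmap_on_edge wfG px) (hmap_on_edge wfG py).
Qed.
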